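(* Let $\boldsymbol{\Xi} \in \mathbb{R}^{6\times 3}$ be a matrix whose columns are written as $\boldsymbol{\xi}_j = \begin{pmatrix}\boldsymbol{\alpha}_j \\ \boldsymbol{\beta}_j\end{pmatrix}$, $j=1,2,3$, with $\boldsymbol{\alpha}_j,\boldsymbol{\beta}_j\in\mathbb{R}^3$, so that $\boldsymbol{\Xi} = \begin{bmatrix}\boldsymbol{\alpha}_1 & \boldsymbol{\alpha}_2 & \boldsymbol{\alpha}_3\\ \boldsymbol{\beta}_1 & \boldsymbol{\beta}_2 & \boldsymbol{\beta}_3\end{bmatrix}$. Suppose $$\Vert\boldsymbol{\alpha}_1\Vert \neq 0 \quad\text{and}\quad \boldsymbol{\alpha}_1\times\boldsymbol{\alpha}_2 \neq \boldsymbol{0}.$$ Then there exist a unique screw-transformation matrix $$\boldsymbol{S} = \begin{bmatrix}\boldsymbol{R} & \boldsymbol{0}\\ [\boldsymbol{p}]_\times \boldsymbol{R} & \boldsymbol{R}\end{bmatrix},\qquad \boldsymbol{R}\in SO(3),\ \boldsymbol{p}\in\mathbb{R}^3,$$ and a unique matrix $\boldsymbol{U}\in\mathbb{R}^{6\times 3}$ of the form $$\boldsymbol{U} = \begin{bmatrix}\boldsymbol{U}_1\\ \boldsymbol{U}_2\end{bmatrix} = \begin{bmatrix} u_{11} & u_{12} & u_{13}\\ 0 & u_{22} & u_{23}\\ 0 & 0 & u_{33}\\ u_{41} & u_{42} & u_{43}\\ 0 & u_{52} & u_{53}\\ 0 & 0 & u_{63}\end{bmatrix}$$ (i.e. $\boldsymbol{U}_1,\boldsymbol{U}_2$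 are $3\times 3$ upper-triangular) with $u_{11}>0$ and $u_{22}>0$, such that $\boldsymbol{\Xi} = \boldsymbol{S}\,\boldsymbol{U}$.
   Context: For $\boldsymbol{a}\in\mathbb{R}^3$, $[\boldsymbol{a}]_\times$ denotes the $3\times 3$ skew-symmetric matrix with $[\boldsymbol{a}]_\times \boldsymbol{b} = \boldsymbol{a}\times\boldsymbol{b}$ for all $\boldsymbol{b}\in\mathbb{R}^3$. A screw-transformation matrix is a $6\times 6$ matrix of the form $\begin{bmatrix}\boldsymbol{R} & \boldsymbol{0}\\ [\boldsymbol{p}]_\times\boldsymbol{R} & \boldsymbol{R}\end{bmatrix}$ with $\boldsymbol{R}$ a $3\times3$ rotation matrix (orthogonal, determinant $+1$) and $\boldsymbol{p}\in\mathbb{R}^3$. A factorization $\boldsymbol{\Xi}=\boldsymbol{S}\boldsymbol{U}$ as in the claim is called an $SU$-decomposition. *)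

From HB Require Import structures.
From mathcomp Require Import all_boot all_order all_algebra.
Set Implicit Arguments. Unset Strict Implicit. Unset Printing Implicit Defensive.
Import Order.TTheory GRing.Theory Num.Theory.
Local Open Scope ring_scope.

Section Defs.
Variable R : rcfType.

Definition vnorm (a : 'cV[R]_3) : R := Num.sqrt (\sum_(i < 3) a i 0 ^+ 2).

Definition crossv (a b : 'cV[R]_3) : 'cV[R]_3 :=
  \col_(i < 3)
    (if i == 0 :> nat then a 1 0 * b 2%:R 0 - a 2%:R 0 * b 1 0
     else if i == 1 :> nat then a 2%:R 0 * b 0 0 - a 0 0 * b 2%:R 0
     else a 0 0 * b 1 0 - a 1 0 * b 0 0).

(* [a]_x : the skew-symmetric matrix with [a]_x b = a x b *)
Definition skew (a : 'cV[R]_3) : 'M[R]_3 :=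
  \matrix_(i < 3, j < 3) crossv a (delta_mx j 0) i 0.

Definition is_rotation (Q : 'M[R]_3) : Prop :=
  Q^T *m Q = 1%:M /\ \det Q = 1.

Definition screw_mx (Q : 'M[R]_3) (p : 'cV[R]_3) : 'M[R]_(3 + 3) :=
  block_mx Q 0 (skew p *m Q) Q.

Definition is_screw (S : 'M[R]_(3 + 3)) : Prop :=
  exists (Q : 'M[R]_3) (p : 'cV[R]_3), is_rotation Q /\ S = screw_mx Q p.

Definition upper_tri (M : 'M[R]_3) : Prop :=
  forall i j : 'I_3, (j < i)%N -> M i j = 0.

Definition is_U_form (U : 'M[R]_(3 + 3, 3)) : Prop :=
  upper_tri (usubmx U) /\ upper_tri (dsubmx U) /\
  0 < usubmx U 0 0 /\ 0 < usubmx U 1 1.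

End Defs.

From Pilot Require Import Defs.
From mathcomp Require Import all_boot all_order all_algebra.
From mathcomp Require Import ring.
Import Order.TTheory GRing.Theory Num.Theory.
Import Defs.
Set Implicit Arguments. Unset Strict Implicit. Unset Printing Implicit Defensive.
Local Open Scope ring_scope.

(* Write Xi = [A; B] with A, B in R^(3x3).  For a rotation Q one has
   Q^T [p]_x Q = [Q^T p]_x, so Xi = S U with S = [Q 0; [p]_x Q  Q] and
   U = [U1; U2] amounts to  A = Q U1  and  Q^T B = [y]_x U1 + U2  with y = Q^T p.
   The first equation is a QR decomposition of A: u11 > 0 and u22 > 0 force the
   first column of Q to be alpha1 / |alpha1| and the third one to be
   (alpha1 x alpha2) / |alpha1 x alpha2|, and the second is then their cross
   product.  In the second equation the strictly lower entries of [y]_x U1 are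
   y3 u11, -y2 u11 and y1 u22 - y2 u12, a triangular system in y which has
   exactly one solution making Q^T B - [y]_x U1 upper triangular. *)

Lemma ord3P (i : 'I_3) : [\/ i = 0, i = 1 | i = 2%:R].
Proof.
by case: i => [[|[|[|m]]] lt_i3]; [constructor 1|constructor 2|constructor 3|by []];
  apply: val_inj.
Qed.

Lemma sum3E (V : nmodType) (F : 'I_3 -> V) : \sum_(i < 3) F i = F 0 + F 1 + F 2%:R.
Proof.
by rewrite !big_ord_recl big_ord0 addr0 addrA; congr (F _ + F _ + F _); apply: val_inj.
Qed.

Lemma sum2E (V : nmodType) (F : 'I_2 -> V) : \sum_(i < 2) F i = F 0 + F 1.
Proof. by rewrite !big_ord_recl big_ord0 addr0; congr (F _ + F _); apply: val_inj. Qed.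

Lemma cV3_ext (T : Type) (u v : 'cV[T]_3) :
  u 0 0 = v 0 0 -> u 1 0 = v 1 0 -> u 2%:R 0 = v 2%:R 0 -> u = v.
Proof.
by move=> e0 e1 e2; apply/matrixP => i j; rewrite (ord1 j); case: (ord3P i) => ->.
Qed.

Lemma mx3_ext (T : Type) (A B : 'M[T]_3) :
  A 0 0 = B 0 0 -> A 0 1 = B 0 1 -> A 0 2%:R = B 0 2%:R ->
  A 1 0 = B 1 0 -> A 1 1 = B 1 1 -> A 1 2%:R = B 1 2%:R ->
  A 2%:R 0 = B 2%:R 0 -> A 2%:R 1 = B 2%:R 1 -> A 2%:R 2%:R = B 2%:R 2%:R -> A = B.
Proof.
move=> e00 e01 e02 e10 e11 e12 e20 e21 e22; apply/matrixP => i j.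
by case: (ord3P i) => ->; case: (ord3P j) => ->.
Qed.

Lemma det3E (R : comPzRingType) (A : 'M[R]_3) : \det A =
    A 0 0 * (A 1 1 * A 2%:R 2%:R - A 1 2%:R * A 2%:R 1)
  - A 0 1 * (A 1 0 * A 2%:R 2%:R - A 1 2%:R * A 2%:R 0)
  + A 0 2%:R * (A 1 0 * A 2%:R 1 - A 1 1 * A 2%:R 0).
Proof.
(* Reindexing through [inord] lets [simpl] evaluate the [lift]ed indices. *)
have -> : A = \matrix_(i, j) A (inord i) (inord j).
  by apply/matrixP => i j; rewrite mxE !inord_val.
rewrite (expand_det_row _ 0) sum3E /cofactor !(expand_det_row _ 0) !sum2E /cofactor.
by rewrite !det_mx11 !mxE /=; ring.
Qed.

Definition dotv (R : pzSemiRingType) n (u v : 'cV[R]_n) := \sum_(i < n) u i 0 * v i 0.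

Ltac expand_coords :=
  rewrite /dotv; (try apply: cV3_ext; try apply: mx3_ext);
  rewrite ?mxE ?sum3E ?mxE ?sum3E ?mxE ?sum3E ?mxE /=.

Section Dot.
Variables (R : comPzRingType) (n : nat).
Implicit Types u v : 'cV[R]_n.

Lemma dotvC u v : dotv u v = dotv v u.
Proof. by apply: eq_bigr => i _; rewrite mulrC. Qed.

Lemma dotvZl k u v : dotv (k *: u) v = k * dotv u v.
Proof. by rewrite /dotv mulr_sumr; apply: eq_bigr => i _; rewrite mxE mulrA. Qed.

Lemma dotvZr k u v : dotv u (k *: v) = k * dotv u v.
Proof. by rewrite dotvC dotvZl dotvC. Qed.

Lemma mulmx_trE m (A B : 'M[R]_(n, m)) i j : (A^T *m B) i j = dotv (col i A) (col j B).
Proof. by rewrite mxE; apply: eq_bigr => k _; rewrite !mxE. Qed.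

End Dot.

Section RealDot.
Variables (R : realDomainType) (n : nat).
Implicit Types u : 'cV[R]_n.

Lemma dotv_ge0 u : 0 <= dotv u u.
Proof. by apply: sumr_ge0 => i _; rewrite -expr2 sqr_ge0. Qed.

Lemma dotv_eq0 u : (dotv u u == 0) = (u == 0).
Proof.
apply/idP/eqP => [/eqP u0 | ->]; last by rewrite /dotv big1 // => i _; rewrite mxE mul0r.
apply/matrixP => i j; rewrite (ord1 j) mxE; apply/eqP; rewrite -sqrf_eq0 expr2.
by apply/eqP; apply: (psumr_eq0P _ u0) => // k _; rewrite -expr2 sqr_ge0.
Qed.

End RealDot.

Section CrossProduct.
Variable R : rcfType.
Implicit Types (u v w : 'cV[R]_3) (Q : 'M[R]_3).

Lemma crossvZl k u v : crossv (k *: u) v = k *: crossv u v. Proof. by expand_coords; ring. Qed.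
Lemma crossvZr k u v : crossv u (k *: v) = k *: crossv u v. Proof. by expand_coords; ring. Qed.
Lemma crossvDr u v w : crossv u (v + w) = crossv u v + crossv u w. Proof. by expand_coords; ring. Qed.
Lemma crossvv u : crossv u u = 0. Proof. by expand_coords; ring. Qed.
Lemma crossv0l v : crossv 0 v = 0. Proof. by expand_coords; ring. Qed.
Lemma dotv_crossl u v : dotv u (crossv u v) = 0. Proof. by expand_coords; ring. Qed.
Lemma dotv_crossr u v : dotv v (crossv u v) = 0. Proof. by expand_coords; ring. Qed.
Lemma dotv_cross_cycle u v w : dotv u (crossv v w) = dotv w (crossv u v).
Proof. by expand_coords; ring. Qed.
Lemma crossv_crossv u v w : crossv u (crossv v w) = dotv u w *: v - dotv u v *: w.
Proof. by expand_coords; ring. Qed.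
Lemma dotv_crossvv u v :
  dotv (crossv u v) (crossv u v) = dotv u u * dotv v v - dotv u v ^+ 2.
Proof. by expand_coords; ring. Qed.

Lemma mulmx_skew u v : skew u *m v = crossv u v. Proof. by expand_coords; ring. Qed.

Lemma skew_conj Q v : Q^T *m skew (Q *m v) *m Q = \det Q *: skew v.
Proof. by rewrite det3E; expand_coords; ring. Qed.

Lemma det_dotv_crossv Q : \det Q = dotv (col 2%:R Q) (crossv (col 0 Q) (col 1 Q)).
Proof. by rewrite det3E; expand_coords; ring. Qed.

Lemma crossv_delta01 : crossv (delta_mx 0 0) (delta_mx 1 0) = delta_mx 2%:R 0 :> 'cV[R]_3.
Proof. by expand_coords; ring. Qed.

Lemma crossv_delta20 : crossv (delta_mx 2%:R 0) (delta_mx 0 0) = delta_mx 1 0 :> 'cV[R]_3.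
Proof. by expand_coords; ring. Qed.

Lemma mulmx_cV3E Q v : Q *m v = v 0 0 *: col 0 Q + v 1 0 *: col 1 Q + v 2%:R 0 *: col 2%:R Q.
Proof. by expand_coords; ring. Qed.

End CrossProduct.

Section Rotations.
Variable R : rcfType.
Implicit Types (a u v w y : 'cV[R]_3) (Q : 'M[R]_3).

Lemma vnormE a : vnorm a = Num.sqrt (dotv a a).
Proof. by congr Num.sqrt; apply: eq_bigr => i _; rewrite expr2. Qed.

Lemma vnorm_sqr a : vnorm a ^+ 2 = dotv a a.
Proof. by rewrite vnormE sqr_sqrtr // dotv_ge0. Qed.

Lemma vnorm_gt0 a : a != 0 -> 0 < vnorm a.
Proof. by rewrite vnormE sqrtr_gt0 lt_def dotv_eq0 dotv_ge0 andbT. Qed.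

Lemma vnormZ k a : vnorm (k *: a) = `|k| * vnorm a.
Proof.
by rewrite !vnormE dotvZl dotvZr mulrA -expr2 sqrtrM ?sqr_ge0 // sqrtr_sqr.
Qed.

Definition unitv a := (vnorm a)^-1 *: a.

Lemma dotv_unitv a : a != 0 -> dotv (unitv a) (unitv a) = 1.
Proof.
move=> a0; rewrite dotvZl dotvZr -vnorm_sqr mulrA -expr2 -exprMn mulVf ?expr1n //.
by rewrite gt_eqF ?vnorm_gt0.
Qed.

Lemma dotv_unitvl a : dotv (unitv a) a = vnorm a.
Proof.
rewrite dotvZl -vnorm_sqr expr2 mulrA.
by have [->|n0] := eqVneq (vnorm a) 0; rewrite ?mulr0 // mulVf ?mul1r.
Qed.

Lemma unitvZ k a : 0 < k -> unitv (k *: a) = unitv a.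
Proof.
move=> k0; rewrite /unitv vnormZ gtr0_norm // scalerA invfM mulrAC mulVf ?mul1r //.
by rewrite gt_eqF.
Qed.

Lemma unitv_id a : dotv a a = 1 -> unitv a = a.
Proof. by rewrite /unitv vnormE => ->; rewrite sqrtr1 invr1 scale1r. Qed.

Lemma rotation_mul_tr Q : is_rotation Q -> Q *m Q^T = 1%:M.
Proof. by case=> /mulmx1C. Qed.

Lemma rotation_trmulK Q m (X : 'M[R]_(3, m)) : is_rotation Q -> Q^T *m (Q *m X) = X.
Proof. by case=> QTQ _; rewrite mulmxA QTQ mul1mx. Qed.

Lemma rotation_mulK_tr Q m (X : 'M[R]_(3, m)) : is_rotation Q -> Q *m (Q^T *m X) = X.
Proof. by move/rotation_mul_tr => QQT; rewrite mulmxA QQT mul1mx. Qed.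

Lemma rotation_skew Q y : is_rotation Q -> skew (Q *m y) *m Q = Q *m skew y.
Proof.
move=> rotQ; case: (rotQ) => _ detQ.
by have := skew_conj Q y; rewrite detQ scale1r => <-; rewrite mulmxA rotation_mulK_tr.
Qed.

Lemma rotation_crossv Q u v : is_rotation Q -> crossv (Q *m u) (Q *m v) = Q *m crossv u v.
Proof. by move=> rotQ; rewrite -!mulmx_skew mulmxA rotation_skew // mulmxA. Qed.

Lemma rotation_dotv_col Q i : is_rotation Q -> dotv (col i Q) (col i Q) = 1.
Proof. by case=> QTQ _; rewrite -mulmx_trE QTQ mxE eqxx. Qed.

Lemma rotation_col_crossv Q : is_rotation Q ->
  crossv (col 0 Q) (col 1 Q) = col 2%:R Q /\ crossv (col 2%:R Q) (col 0 Q) = col 1 Q.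
Proof.
by move=> rotQ; rewrite !colE !rotation_crossv // crossv_delta01 crossv_delta20.
Qed.

Definition col3_mx u v w : 'M[R]_3 := \matrix_(i, j) [:: u; v; w]`_j i 0.

Lemma col3_mx0 u v w : col 0 (col3_mx u v w) = u.
Proof. by apply/matrixP => i j; rewrite (ord1 j) !mxE. Qed.
Lemma col3_mx1 u v w : col 1 (col3_mx u v w) = v.
Proof. by apply/matrixP => i j; rewrite (ord1 j) !mxE. Qed.
Lemma col3_mx2 u v w : col 2%:R (col3_mx u v w) = w.
Proof. by apply/matrixP => i j; rewrite (ord1 j) !mxE. Qed.

Lemma col3_mx_col Q : col3_mx (col 0 Q) (col 1 Q) (col 2%:R Q) = Q.
Proof. by apply/matrixP => i j; rewrite mxE; case: (ord3P j) => ->; rewrite mxE. Qed.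

Lemma col3_mx_rotation u w : dotv u u = 1 -> dotv w w = 1 -> dotv u w = 0 ->
  is_rotation (col3_mx u (crossv w u) w).
Proof.
move=> uu ww uw; split; last first.
  by rewrite det_dotv_crossv col3_mx0 col3_mx1 col3_mx2 crossv_crossv uu uw !scale0r
    scale1r subr0.
apply/matrixP => i j; rewrite mulmx_trE mxE.
case: (ord3P i) => ->; case: (ord3P j) => ->;
  rewrite ?col3_mx0 ?col3_mx1 ?col3_mx2 /= ?dotv_crossvv ?(dotvC (crossv w u))
    ?(dotvC w u) ?dotv_crossl ?dotv_crossr ?uu ?ww ?uw //.
by rewrite expr0n subr0 mulr1.
Qed.

End Rotations.

Lemma upper_tri3P (R : rcfType) (M : 'M[R]_3) :
  upper_tri M <-> [/\ M 1 0 = 0, M 2%:R 0 = 0 & M 2%:R 1 = 0].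
Proof.
split=> [M_upper | [m10 m20 m21] i j]; first by split; apply: M_upper.
by case: (ord3P i) => ->; case: (ord3P j) => ->.
Qed.

Section GramSchmidt.
Variables (R : rcfType) (A : 'M[R]_3).
Local Notation a1 := (col 0 A).
Local Notation a2 := (col 1 A).

Definition gram_schmidt : 'M[R]_3 :=
  let q1 := unitv a1 in let q3 := unitv (crossv a1 a2) in col3_mx q1 (crossv q3 q1) q3.

Hypothesis a12 : crossv a1 a2 != 0.

Lemma gram_schmidt_rotation : is_rotation gram_schmidt.
Proof.
have a1_neq0 : a1 != 0 by apply: contraNneq a12 => ->; rewrite crossv0l.
apply: col3_mx_rotation; rewrite ?dotv_unitv //.
by rewrite dotvZl dotvZr dotv_crossl !mulr0.
Qed.

Lemma gram_schmidt_upper :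
  [/\ upper_tri (gram_schmidt^T *m A), 0 < (gram_schmidt^T *m A) 0 0 & 0 < (gram_schmidt^T *m A) 1 1].
Proof.
have a1_neq0 : a1 != 0 by apply: contraNneq a12 => ->; rewrite crossv0l.
split.
- move=> i j; rewrite mulmx_trE.
  case: (ord3P i) => ->; case: (ord3P j) => -> //= _; rewrite ?col3_mx1 ?col3_mx2.
  + by rewrite crossvZr dotvZl dotvC dotv_crossr mulr0.
  + by rewrite dotvZl dotvC dotv_crossl mulr0.
  + by rewrite dotvZl dotvC dotv_crossr mulr0.
- by rewrite mulmx_trE col3_mx0 dotv_unitvl vnorm_gt0.
rewrite mulmx_trE col3_mx1 dotvC 2!dotv_cross_cycle crossvZl dotvZr dotv_unitvl.
by rewrite mulr_gt0 ?invr_gt0 ?vnorm_gt0.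
Qed.

Lemma gram_schmidt_unique Q U : is_rotation Q ->
  upper_tri U -> 0 < U 0 0 -> 0 < U 1 1 -> A = Q *m U -> Q = gram_schmidt.
Proof.
move=> rotQ U_upper u00 u11 eA.
have [u10 u20 u21] := iffLR (upper_tri3P U) U_upper.
have [c01 c20] := rotation_col_crossv rotQ.
have ea1 : a1 = U 0 0 *: col 0 Q.
  by rewrite eA colE -mulmxA -colE mulmx_cV3E !mxE u10 u20 !scale0r !addr0.
have ea2 : a2 = U 0 1 *: col 0 Q + U 1 1 *: col 1 Q.
  by rewrite eA colE -mulmxA -colE mulmx_cV3E !mxE u21 scale0r addr0.
have eq1 : unitv a1 = col 0 Q by rewrite ea1 unitvZ // unitv_id // rotation_dotv_col.
have eq3 : unitv (crossv a1 a2) = col 2%:R Q.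
  rewrite ea1 ea2 crossvZl crossvDr !crossvZr crossvv c01 scaler0 add0r scalerA.
  by rewrite unitvZ ?mulr_gt0 // unitv_id // rotation_dotv_col.
by rewrite /gram_schmidt eq1 eq3 c20 col3_mx_col.
Qed.

End GramSchmidt.

Section SkewOffset.
Variables (R : rcfType) (C U : 'M[R]_3).
Hypotheses (U_upper : upper_tri U) (u00 : U 0 0 != 0) (u11 : U 1 1 != 0).

Definition skew_offset : 'cV[R]_3 :=
  let p1 := - (C 2%:R 0 / U 0 0) in
  \col_i [:: (C 2%:R 1 + p1 * U 0 1) / U 1 1; p1; C 1 0 / U 0 0]`_i.

Lemma upper_tri_sub_skewP p : upper_tri (C - skew p *m U) <-> p = skew_offset.
Proof.
have [u10 u20 u21] := iffLR (upper_tri3P U) U_upper.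
have [e10 e20 e21] : [/\ (C - skew p *m U) 1 0 = C 1 0 - p 2%:R 0 * U 0 0,
                         (C - skew p *m U) 2%:R 0 = C 2%:R 0 + p 1 0 * U 0 0
                       & (C - skew p *m U) 2%:R 1 = C 2%:R 1 + p 1 0 * U 0 1 - p 0 0 * U 1 1].
  by rewrite !mxE !sum3E !mxE /= u10 u20 u21; split; ring.
rewrite upper_tri3P e10 e20 e21; split=> [[] | ->].
- move=> /eqP; rewrite subr_eq0 => /eqP c10.
  move=> /eqP; rewrite addr_eq0 => /eqP c20.
  move=> /eqP; rewrite subr_eq0 => /eqP c21.
  have p1E : p 1 0 = - (C 2%:R 0 / U 0 0) by rewrite c20 mulNr mulfK ?opprK.
  apply: cV3_ext; rewrite mxE /=.
  + by rewrite -p1E c21 mulfK.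
  + by [].
  + by rewrite c10 mulfK.
by rewrite !mxE /= !mulNr !divfK // !subrr.
Qed.
End SkewOffset.

Section Screw.
Variable R : rcfType.
Implicit Types (Q A B U : 'M[R]_3) (y : 'cV[R]_3).

Lemma screw_mx_mul Q y U1 U2 : is_rotation Q ->
  screw_mx Q (Q *m y) *m col_mx U1 U2 = col_mx (Q *m U1) (Q *m (skew y *m U1 + U2)).
Proof.
by move=> rotQ; rewrite mul_block_col mul0mx addr0 rotation_skew // -mulmxA -mulmxDr.
Qed.

Lemma screw_factorP Q y A B U1 U2 : is_rotation Q ->
  col_mx A B = screw_mx Q (Q *m y) *m col_mx U1 U2 <->
  U1 = Q^T *m A /\ U2 = Q^T *m B - skew y *m U1.
Proof.
move=> rotQ; rewrite screw_mx_mul //; split=> [/eq_col_mx [-> ->] | [-> ->]].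
  by rewrite !rotation_trmulK // addrC addKr.
by rewrite addrC subrK !rotation_mulK_tr.
Qed.

End Screw.

Theorem theorem1 (R : rcfType) (Xi : 'M[R]_(3 + 3, 3)) :
  let alpha1 := col 0 (usubmx Xi) in
  let alpha2 := col 1 (usubmx Xi) in
  vnorm alpha1 != 0 -> crossv alpha1 alpha2 != 0 ->
  exists! SU : 'M[R]_(3 + 3) * 'M[R]_(3 + 3, 3),
    [/\ is_screw SU.1, is_U_form SU.2 & Xi = SU.1 *m SU.2].
Proof.
(* The hypothesis on [vnorm alpha1] is implied by the one on the cross product. *)
move=> alpha1 alpha2 _ a12.
set A := usubmx Xi in alpha1 alpha2 a12; set B := dsubmx Xi; set Q := gram_schmidt A.
set U1 := Q^T *m A; set y := skew_offset (Q^T *m B) U1.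
set U2 := Q^T *m B - skew y *m U1.
have rotQ : is_rotation Q := gram_schmidt_rotation a12.
have [U1_upper u00 u11] := gram_schmidt_upper a12.
have U2_upper : upper_tri U2.
  exact/(upper_tri_sub_skewP _ U1_upper (lt0r_neq0 u00) (lt0r_neq0 u11)).
exists (screw_mx Q (Q *m y), col_mx U1 U2); split.
  split=> /=.
  - by exists Q, (Q *m y).
  - by rewrite /is_U_form col_mxKu col_mxKd.
  - by rewrite -[Xi]vsubmxK; apply/screw_factorP.
move=> [_ U] /= [[Q' [p [rotQ' ->]]] [U1'_upper [U2'_upper [u00' u11']]]].
rewrite -(vsubmxK U) -[p](rotation_mulK_tr _ rotQ') -[Xi]vsubmxK.
move=> /screw_factorP-/(_ rotQ') [eU1 eU2].
have eA : A = Q' *m usubmx U by rewrite eU1 rotation_mulK_tr.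
have eQ : Q' = Q := gram_schmidt_unique rotQ' U1'_upper u00' u11' eA.
rewrite eQ in eU1 eU2 *; rewrite eU1 in eU2.
have ey : Q^T *m p = y.
  by apply/(upper_tri_sub_skewP _ U1_upper (lt0r_neq0 u00) (lt0r_neq0 u11)); rewrite -eU2.
by rewrite eU1 eU2 ey.
Qed.
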